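(* Let $\mathcal{X}\subseteq\mathbb{R}^d$ be closed and convex, let $h:\mathcal{X}\to\mathbb{R}$ be strictly convex and continuously differentiable, let $\mu>0$, and let $f:\mathcal{X}\to\mathbb{R}$ be continuously differentiable with a minimizer $x^\ast$ and $\mu$-uniformly convex with respect to $h$, i.e. $D_f(x,y)\ge\mu D_h(x,y)$ for all $x,y\in\mathcal{X}$. Let $\alpha,\beta:\mathbb{R}\to\mathbb{R}$ be smooth with $\beta$ nondecreasing and $\dot\beta_t\le e^{\alpha_t}$ for all $t$. Let $t\mapsto X_t\in\mathcal{X}$ be a differentiable curve such that $Z_t:=X_t+e^{-\alpha_t}\dot X_t\in\mathcal{X}$, $t\mapsto Z_t$ and $t\mapsto\nabla h(Z_t)$ are differentiable, and $$\frac{d}{dt}\nabla h(Z_t)=\dot\beta_t\nabla h(X_t)-\dot\beta_t\nabla h(Z_t)-\frac{e^{\alpha_t}}{\mu}\nabla f(X_t).$$ Then, for $x=x^\ast$, $$\frac{d}{dt}\Big\{e^{\beta_t}\mu D_h(x,Z_t)\Big\}\le-\frac{d}{dt}\Big\{e^{\beta_t}\big(f(X_t)-f(x)\big)\Big\};$$ if moreover $\dot\beta_t=e^{\alpha_t}$ for all $t$, the inequality holds for every $x\in\mathcal{X}$. Consequently $\mathcal{E}_t=e^{\beta_t}\big(\mu D_h(x,Z_t)+f(X_t)-f(x)\big)$ is nonincreasing in $t$ for $x=x^\ast$ (and for every $x\in\mathcal{X}$ when $\dot\beta_t=e^{\alpha_t}$).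
   Context: For a differentiable function $g$, $D_g(y,x)=g(y)-g(x)-\langle\nabla g(x),y-x\rangle$ denotes its Bregman divergence. *)

From HB Require Import structures.
From mathcomp Require Import all_boot all_order all_algebra.
From mathcomp Require Import all_classical all_reals all_analysis.
Set Implicit Arguments. Unset Strict Implicit. Unset Printing Implicit Defensive.
Import Order.TTheory GRing.Theory Num.Theory.
Import numFieldNormedType.Exports.
Local Open Scope classical_set_scope.
Local Open Scope ring_scope.

Definition dotp (R : realType) (d : nat) (u v : 'rV[R]_d) : R :=
  \sum_(i < d) u ord0 i * v ord0 i.

(* Bregman divergence D_g(y,x) = g(y) - g(x) - <grad g(x), y - x>,
   where gg is the gradient map of g. *)
Definition bregman (R : realType) (d : nat) (g : 'rV[R]_d -> R)
  (gg : 'rV[R]_d -> 'rV[R]_d) (y x : 'rV[R]_d) : R :=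
  g y - g x - dotp (gg x) (y - x).

Definition convex_set_rV (R : realType) (d : nat) (S : set 'rV[R]_d) : Prop :=
  forall x y (l : R), S x -> S y -> 0 <= l -> l <= 1 ->
    S (l *: x + (1 - l) *: y).

Definition strictly_convex_on (R : realType) (d : nat) (S : set 'rV[R]_d)
  (g : 'rV[R]_d -> R) : Prop :=
  forall x y (l : R), S x -> S y -> x <> y -> 0 < l -> l < 1 ->
    g (l *: x + (1 - l) *: y) < l * g x + (1 - l) * g y.

Definition C1_with_gradient (R : realType) (d : nat) (S : set 'rV[R]_d)
  (g : 'rV[R]_d -> R) (gg : 'rV[R]_d -> 'rV[R]_d) : Prop :=
  (forall x, S x -> differentiable g x /\ forall v, 'd g x v = dotp (gg x) v)
  /\ {within S, continuous gg}.

Definition smooth_fun (R : realType) (a : R -> R) : Prop :=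
  forall (n : nat) (t : R), derivable (derive1n n a) t 1.

(* Put D(t) := D_h(x, Z_t). Then dD/dt = -<d/dt grad h(Z_t), x - Z_t>, so the
   flow equation, the three-point identity
     <grad h(X) - grad h(Z), x - Z> = D_h(x, Z) + D_h(Z, X) - D_h(x, X)
   and dX/dt = e^alpha (Z - X) turn
     d/dt {e^beta mu D} + d/dt {e^beta (f(X) - f(x))}
   into e^beta times
     beta' mu (D_h(x, X) - D_h(Z, X)) + beta' (f(X) - f(x)) + e^alpha <grad f(X), x - X>.
   Uniform convexity mu D_h(x, X) <= D_f(x, X), together with beta' >= 0 and
   D_h(Z, X) >= 0, bounds this by (e^alpha - beta') <grad f(X), x - X>. That term
   vanishes when beta' = e^alpha, and is nonpositive at a minimizer xstar, where
   beta' <= e^alpha and <grad f(X), xstar - X> <= f(xstar) - f(X) <= 0. The energy is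
   then nonincreasing because its derivative is nonpositive. *)

From HB Require Import structures.
From mathcomp Require Import all_boot all_order all_algebra.
From mathcomp Require Import all_classical all_reals all_analysis.
From mathcomp Require Import ring lra.
Import Order.TTheory GRing.Theory Num.Theory.
Import numFieldNormedType.Exports.
Local Open Scope classical_set_scope.
Local Open Scope ring_scope.

Section dotp.
Context {R : realType} {d : nat}.
Implicit Types u v w : 'rV[R]_d.

Lemma dotpDl u v w : dotp (u + v) w = dotp u w + dotp v w.
Proof. by rewrite /dotp -big_split; apply: eq_bigr => i _; rewrite !mxE mulrDl. Qed.

Lemma dotpDr u v w : dotp w (u + v) = dotp w u + dotp w v.
Proof. by rewrite /dotp -big_split; apply: eq_bigr => i _; rewrite !mxE mulrDr. Qed.

Lemma dotpZl (a : R) u w : dotp (a *: u) w = a * dotp u w.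
Proof. by rewrite /dotp mulr_sumr; apply: eq_bigr => i _; rewrite !mxE mulrA. Qed.

Lemma dotpZr (a : R) u w : dotp w (a *: u) = a * dotp w u.
Proof. by rewrite /dotp mulr_sumr; apply: eq_bigr => i _; rewrite !mxE mulrCA. Qed.

Lemma dotpNr u w : dotp w (- u) = - dotp w u.
Proof. by rewrite -scaleN1r dotpZr mulN1r. Qed.

Lemma dotpBl u v w : dotp (u - v) w = dotp u w - dotp v w.
Proof. by rewrite dotpDl -scaleN1r dotpZl mulN1r. Qed.

Lemma is_derive_dotp {u v : R -> 'rV[R]_d} {t : R} {du dv : 'rV[R]_d} :
  is_derive t 1 u du -> is_derive t 1 v dv ->
  is_derive t 1 (fun s => dotp (u s) (v s)) (dotp du (v t) + dotp (u t) dv).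
Proof.
move=> du_ dv_.
have coord (M : R -> 'rV[R]_d) dM i : is_derive t 1 M dM ->
    is_derive t 1 (fun s => M s ord0 i) (dM ord0 i).
  move=> [dM_ <-]; split; first exact: ((derivable_mxP M t 1).1 dM_ ord0 i).
  by rewrite (derive_mx dM_) mxE.
have := @is_derive_sum _ _ _ d
  (fun i => (fun s => u s ord0 i) * (fun s => v s ord0 i)) t 1
  (fun i => u t ord0 i *: dv ord0 i + v t ord0 i *: du ord0 i)
  (fun i => is_deriveM (coord _ _ i du_) (coord _ _ i dv_)).
have -> : \sum_(i < d) ((fun s => u s ord0 i) * (fun s => v s ord0 i)) =
   (fun s => dotp (u s) (v s)).
  by apply/funext => s; rewrite fct_sumE.
move/is_derive_eq; apply.
rewrite /dotp -big_split; apply: eq_bigr => i _ /=.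
by rewrite /GRing.scale /= addrC mulrC [X in _ + X]mulrC.
Qed.

End dotp.

Section gradient.
Context {R : realType} {d : nat}.
Implicit Types (g : 'rV[R]_d -> R) (gg : 'rV[R]_d -> 'rV[R]_d) (x y z : 'rV[R]_d).

Definition has_gradient g gg x :=
  differentiable g x /\ forall v, 'd g x v = dotp (gg x) v.

Lemma bregman_three_point g gg x y z :
  dotp (gg y - gg z) (x - z) =
  bregman g gg x z + bregman g gg z y - bregman g gg x y.
Proof.
rewrite /bregman.
have -> : x - y = (x - z) + (z - y) by rewrite addrA subrK.
rewrite dotpBl (dotpDr (x - z)); lra.
Qed.

Lemma is_derive_comp_gradient {g gg} {u : R -> 'rV[R]_d} {t : R} {du} :
  has_gradient g gg (u t) -> is_derive t 1 u du ->
  is_derive t 1 (g \o u) (dotp (gg (u t)) du).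
Proof.
move=> [dg dgE] [/derivable1_diffP du_ <-].
have dgu : differentiable (g \o u) t by exact: differentiable_comp.
split; first exact/derivable1_diffP.
have -> : 'D_1 (g \o u) t = 'd g (u t) ('D_1 u t).
  by rewrite deriveE // diff_comp //= [in RHS]deriveE.
exact: dgE.
Qed.

Lemma is_derive_bregman_curve {g gg} x {u : R -> 'rV[R]_d} {t : R} {du dG} :
  has_gradient g gg (u t) -> is_derive t 1 u du -> is_derive t 1 (gg \o u) dG ->
  is_derive t 1 (fun s => bregman g gg x (u s)) (- dotp dG (x - u t)).
Proof.
move=> gradg du_ dG_.
have := is_deriveB (is_deriveB (is_derive_cst (g x) t 1) (is_derive_comp_gradient gradg du_))
  (is_derive_dotp dG_ (is_deriveB (is_derive_cst x t 1) du_)).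
move/is_derive_eq; apply.
by rewrite /= !sub0r dotpNr; lra.
Qed.

Lemma bregman_ge0 {S : set 'rV[R]_d} {g gg x y} :
  strictly_convex_on S g -> has_gradient g gg x -> S x -> S y ->
  0 <= bregman g gg y x.
Proof.
move=> g_cvx [dg dgE] Sx Sy.
have [->|/eqP yx] := eqVneq y x.
  by rewrite /bregman !subrr /dotp big1 // => i _; rewrite mxE mulr0.
rewrite /bregman subr_ge0 -dgE -deriveE //.
set v := y - x.
have dv : derivable g x v by exact: diff_derivable.
(* Convexity only controls the chords with 0 < l < 1, hence the right limit. *)
have right_quotient :
    (fun l => l^-1 *: ((g \o shift x) (l *: v) - g x)) @ 0^'+ --> 'D_v g x.
  move=> A /dv /nbhs_ballP [_ /posnumP[e] xe_A].
  by exists e%:num => //= z xe_z /gt_eqF/negbT/xe_A; exact.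
apply: (cvgr_to_le right_quotient); near=> l.
have l_gt0 : 0 < l by near: l; exact: nbhs_right_gt.
have l_lt1 : l < 1 by near: l; exact: nbhs_right_lt.
have chord : l *: v + x = l *: y + (1 - l) *: x.
  by rewrite /v scalerBr scalerBl scale1r addrA addrAC.
have := g_cvx y x l Sy Sx yx l_gt0 l_lt1.
rewrite /= /GRing.scale /= chord -[_^-1 * _]mulrC ler_pdivrMr //; lra.
Unshelve. all: by end_near.
Qed.

End gradient.

Section real_calculus.
Context {R : realType}.

Lemma is_derive_expR_mul {b w : R -> R} {t db dw : R} :
  is_derive t 1 b db -> is_derive t 1 w dw ->
  is_derive t 1 (fun s => expR (b s) * w s) (expR (b t) * (db * w t + dw)).
Proof.
move=> [db_ <-] dw_.
have expb : is_derive t 1 (expR \o b) (expR (b t) * 'D_1 b t).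
  have Dexp : 'D_1 expR (b t) = expR (b t) := derive_val.
  split; first by apply/derivable1_diffP/differentiable_comp;
    apply/derivable1_diffP => //; exact: derivable_expR.
  by rewrite -derive1E derive1_comp ?derivable_expR // !derive1E Dexp.
have := is_deriveM expb dw_.
move/is_derive_eq; apply.
by rewrite /GRing.scale /=; ring.
Qed.

Lemma nondecreasing_derive_ge0 {f : R -> R} {t : R} :
  {homo f : x y / x <= y} -> derivable f t 1 -> 0 <= 'D_1 f t.
Proof.
move=> ndf df; apply: limr_ge => //.
near=> h.
have : h != 0 by near: h; exact: nbhs_dnbhs_neq.
rewrite /= /GRing.scale /= mulr1 neq_lt => /orP[h0|h0].
- by rewrite nmulr_rge0 ?invr_lt0 // subr_le0 ndf // gerDr ltW.
- by rewrite pmulr_rge0 ?invr_gt0 // subr_ge0 ndf // lerDr ltW.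
Unshelve. all: by end_near.
Qed.

Lemma derive_le0_nonincreasing {F : R -> R} :
  (forall t, derivable F t 1) -> (forall t, 'D_1 F t <= 0) ->
  {homo F : s t /~ s <= t}.
Proof.
move=> dF dF_le0 s t st.
apply: (@ler0_derive1_le_cc R F t s) => //.
- by move=> z _; rewrite derive1E.
- by apply: derivable_within_continuous => z _; exact: dF.
- by rewrite in_itv /= lexx st.
- by rewrite in_itv /= lexx st.
Qed.

End real_calculus.

Section bregman_flow.
Context {R : realType} {d : nat}.
Context {Xs : set 'rV[R]_d} {h f : 'rV[R]_d -> R} {gh gf : 'rV[R]_d -> 'rV[R]_d}.
Context {mu : R} {alpha beta : R -> R} {X Z : R -> 'rV[R]_d}.
Implicit Types (x y xstar : 'rV[R]_d) (t : R).

Hypothesis h_cvx : strictly_convex_on Xs h.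
Hypothesis h_grad : forall {x}, Xs x -> has_gradient h gh x.
Hypothesis f_grad : forall {x}, Xs x -> has_gradient f gf x.
Hypothesis mu_gt0 : 0 < mu.
Hypothesis f_unif_cvx :
  forall {x y}, Xs x -> Xs y -> mu * bregman h gh x y <= bregman f gf x y.
Hypothesis beta_derivable : forall t, derivable beta t 1.
Hypothesis beta_nondecr : {homo beta : s t / s <= t}.
Hypothesis X_derivable : forall t, derivable X t 1.
Hypothesis X_in : forall t, Xs (X t).
Hypothesis Z_in : forall t, Xs (Z t).
Hypothesis Z_derivable : forall t, derivable Z t 1.
Hypothesis ghZ_derivable : forall t, derivable (gh \o Z) t 1.
Hypothesis X'E : forall t, derive1 X t = expR (alpha t) *: (Z t - X t).
Hypothesis ghZ'E : forall t, derive1 (gh \o Z) t =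
  derive1 beta t *: gh (X t) - derive1 beta t *: gh (Z t)
  - (expR (alpha t) / mu) *: gf (X t).

Lemma grad_dotp_minimizer_le0 xstar y :
  Xs xstar -> Xs y -> (forall x, Xs x -> f xstar <= f x) ->
  dotp (gf y) (xstar - y) <= 0.
Proof.
move=> xstar_in y_in xstar_min.
have := f_unif_cvx xstar_in y_in.
have := mulr_ge0 (ltW mu_gt0) (bregman_ge0 h_cvx (h_grad y_in) y_in xstar_in).
have := xstar_min y y_in.
rewrite /bregman; lra.
Qed.

Lemma is_derive_weighted_bregman x t :
  is_derive t 1 (fun s => expR (beta s) * (mu * bregman h gh x (Z s)))
    (expR (beta t) * ('D_1 beta t * (mu * bregman h gh x (Z t))
                     - mu * dotp ('D_1 (gh \o Z) t) (x - Z t))).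
Proof.
have dB := is_derive_bregman_curve x (h_grad (Z_in t))
  (derivableP (Z_derivable t)) (derivableP (ghZ_derivable t)).
have dmuB : is_derive t 1 (fun s => mu * bregman h gh x (Z s))
    (mu * - dotp ('D_1 (gh \o Z) t) (x - Z t)) := is_deriveZ mu dB.
have := is_derive_expR_mul (derivableP (beta_derivable t)) dmuB.
move/is_derive_eq; apply.
by rewrite mulrN.
Qed.

Lemma is_derive_weighted_gap x t :
  is_derive t 1 (fun s => expR (beta s) * (f (X s) - f x))
    (expR (beta t) * ('D_1 beta t * (f (X t) - f x) + dotp (gf (X t)) ('D_1 X t))).
Proof.
have dfX := is_derive_comp_gradient (f_grad (X_in t)) (derivableP (X_derivable t)).
have := is_derive_expR_mul (derivableP (beta_derivable t))
  (is_deriveB dfX (is_derive_cst (f x) t 1)).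
move/is_derive_eq; apply.
by rewrite subr0.
Qed.

Lemma weighted_energy_derive_le x t : Xs x ->
  (expR (alpha t) - derive1 beta t) * dotp (gf (X t)) (x - X t) <= 0 ->
  derive1 (fun s => expR (beta s) * (mu * bregman h gh x (Z s))) t <=
  - derive1 (fun s => expR (beta s) * (f (X s) - f x)) t.
Proof.
move=> x_in gap.
have [_ DB] := is_derive_weighted_bregman x t.
have [_ DG] := is_derive_weighted_gap x t.
rewrite !derive1E DB DG -!derive1E ghZ'E X'E dotpZr.
set b' := derive1 beta t in gap *; set ea := expR (alpha t) in gap *.
have b'_ge0 : 0 <= b' by rewrite /b' derive1E nondecreasing_derive_ge0.
have flow_term :
    mu * dotp (b' *: gh (X t) - b' *: gh (Z t) - (ea / mu) *: gf (X t)) (x - Z t) =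
    b' * mu * dotp (gh (X t) - gh (Z t)) (x - Z t) - ea * dotp (gf (X t)) (x - Z t).
  by rewrite !dotpBl !dotpZl; field; exact: lt0r_neq0.
have split_dir : ea * dotp (gf (X t)) (x - Z t) + ea * dotp (gf (X t)) (Z t - X t) =
    ea * dotp (gf (X t)) (x - X t) by rewrite -mulrDr -dotpDr addrA subrK.
have unif := ler_wpM2l b'_ge0 (f_unif_cvx x_in (X_in t)).
have DZX_ge0 := mulr_ge0 b'_ge0 (mulr_ge0 (ltW mu_gt0)
  (bregman_ge0 h_cvx (h_grad (X_in t)) (X_in t) (Z_in t))).
rewrite -[- (expR _ * _)]mulrN ler_pM2l ?expR_gt0 // flow_term (bregman_three_point h).
rewrite /bregman in unif DZX_ge0 *; lra.
Qed.

Lemma weighted_energy_nonincreasing x : Xs x ->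
  (forall t, (expR (alpha t) - derive1 beta t) * dotp (gf (X t)) (x - X t) <= 0) ->
  {homo (fun t => expR (beta t) * (mu * bregman h gh x (Z t) + f (X t) - f x))
    : s t /~ s <= t}.
Proof.
move=> x_in gap.
have -> : (fun t => expR (beta t) * (mu * bregman h gh x (Z t) + f (X t) - f x)) =
    (fun s => expR (beta s) * (mu * bregman h gh x (Z s))) +
    (fun s => expR (beta s) * (f (X s) - f x)).
  by apply/funext => s; rewrite /= -mulrDr addrA.
apply: derive_le0_nonincreasing => t;
  have [dB _] := is_derive_weighted_bregman x t;
  have [dG _] := is_derive_weighted_gap x t.
  exact: derivableD.
have := weighted_energy_derive_le x t x_in (gap t).
rewrite deriveD // !derive1E; lra.
Qed.

End bregman_flow.

Theorem proposition3 (R : realType) (d : nat) (Xs : set 'rV[R]_d)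
  (h f : 'rV[R]_d -> R) (gh gf : 'rV[R]_d -> 'rV[R]_d) (mu : R)
  (xstar : 'rV[R]_d) (alpha beta : R -> R) (X : R -> 'rV[R]_d) :
  closed Xs -> convex_set_rV Xs ->
  strictly_convex_on Xs h -> C1_with_gradient Xs h gh ->
  0 < mu ->
  C1_with_gradient Xs f gf ->
  Xs xstar -> (forall x, Xs x -> f xstar <= f x) ->
  (forall x y, Xs x -> Xs y -> mu * bregman h gh x y <= bregman f gf x y) ->
  smooth_fun alpha -> smooth_fun beta ->
  {homo beta : s t / s <= t} ->
  (forall t, derive1 beta t <= expR (alpha t)) ->
  let Z := fun t => X t + expR (- alpha t) *: derive1 X t in
  (forall t, derivable X t 1) ->
  (forall t, Xs (X t)) ->
  (forall t, Xs (Z t)) ->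
  (forall t, derivable Z t 1) ->
  (forall t, derivable (gh \o Z) t 1) ->
  (forall t, derive1 (gh \o Z) t =
     derive1 beta t *: gh (X t) - derive1 beta t *: gh (Z t)
     - (expR (alpha t) / mu) *: gf (X t)) ->
  let ineq := fun x t =>
    derive1 (fun s => expR (beta s) * (mu * bregman h gh x (Z s))) t
    <= - derive1 (fun s => expR (beta s) * (f (X s) - f x)) t in
  let E := fun x t =>
    expR (beta t) * (mu * bregman h gh x (Z t) + f (X t) - f x) in
  [/\ (forall t, ineq xstar t),
      ((forall t, derive1 beta t = expR (alpha t)) ->
         forall x, Xs x -> forall t, ineq x t),
      {homo E xstar : s t /~ s <= t} &
      ((forall t, derive1 beta t = expR (alpha t)) ->
         forall x, Xs x -> {homo E x : s t /~ s <= t})].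
Proof.
move=> _ _ h_cvx [h_grad _] mu_gt0 [f_grad _] xstar_in xstar_min f_unif _ beta_smooth
  beta_nondecr beta'_le Z X_derivable X_in Z_in Z_derivable ghZ_derivable ghZ'E ineq E.
have beta_derivable t : derivable beta t 1 := beta_smooth 0%N t.
have X'E t : derive1 X t = expR (alpha t) *: (Z t - X t).
  by rewrite /Z [X t + _]addrC addrK scalerA expRxMexpNx_1 scale1r.
have energy_derive_le := weighted_energy_derive_le h_cvx h_grad f_grad mu_gt0
  f_unif beta_derivable beta_nondecr X_derivable X_in Z_in Z_derivable
  ghZ_derivable X'E ghZ'E.
have energy_nonincreasing := weighted_energy_nonincreasing h_cvx h_grad f_grad
  mu_gt0 f_unif beta_derivable beta_nondecr X_derivable X_in Z_in Z_derivable
  ghZ_derivable X'E ghZ'E.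
have gap_xstar t :
    (expR (alpha t) - derive1 beta t) * dotp (gf (X t)) (xstar - X t) <= 0.
  rewrite mulr_ge0_le0 ?subr_ge0 //.
  exact: (grad_dotp_minimizer_le0 h_cvx h_grad mu_gt0 f_unif).
have gap_flow (beta'E : forall t, derive1 beta t = expR (alpha t)) x t :
    (expR (alpha t) - derive1 beta t) * dotp (gf (X t)) (x - X t) <= 0.
  by rewrite beta'E subrr mul0r.
split.
- by move=> t; apply: energy_derive_le.
- by move=> beta'E x x_in t; apply: energy_derive_le; last exact: gap_flow.
- exact: energy_nonincreasing.
- by move=> beta'E x x_in; apply: energy_nonincreasing; last exact: gap_flow.
Qed.
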